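(* (Simulation of $\lambda_{\mathrm{act}}$ configurations in $\lambda_{\mathrm{ch}}$.) If $\Gamma ; \Delta \vdash \mathcal{C}_1$ in $\lambda_{\mathrm{act}}$ and $\mathcal{C}_1 \longrightarrow \mathcal{C}_2$, then there exists some $\lambda_{\mathrm{ch}}$ configuration $\mathcal{D}$ such that $[\![\mathcal{C}_1]\!] \longrightarrow^{*} \mathcal{D}$ with $\mathcal{D} \equiv [\![\mathcal{C}_2]\!]$.
   Context: $\lambda_{\mathrm{act}}$: types $A,B,C ::= \mathbf{1}\mid A\xrightarrow{C}B\mid\mathsf{ActorRef}(A)$; $\alpha$ ranges over variables and names; values $V,W ::= \alpha\mid\lambda x.M\mid()$; computations $M ::= V\,W\mid\mathbf{let}\ x\Leftarrow M\ \mathbf{in}\ N\mid\mathbf{return}\ V\mid\mathbf{spawn}\ M\mid\mathbf{send}\ V\ W\mid\mathbf{receive}\mid\mathbf{self}$; value typing ($\lambda x.M:A\xrightarrow{C}B$ if $\Gamma,x:A\mid C\vdash M:B$; variables/names from $\Gamma$; $():\mathbf 1$); computation typing $\Gamma\mid C\vdash M:A$ ($V\,W:B$ if $V:A\xrightarrow{C}B$, $W:A$; $\mathbf{let}$ under $C$; $\mathbf{return}\ V:A$ if $V:A$; $\mathbf{send}\ V\ W:\mathbf 1$ if $V:A$, $W:\mathsf{ActorRef}(A)$; $\Gamma\mid A\vdash\mathbf{receive}:A$; $\Gamma\mid C\vdash\mathbf{spawn}\ M:\mathsf{ActorRef}(A)$ if $\Gamma\mid A\vdash M:\mathbf 1$;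 $\Gamma\mid A\vdash\mathbf{self}:\mathsf{ActorRef}(A)$). Configurations $\mathcal{C}::=\mathcal{C}\parallel\mathcal{D}\mid(\nu a)\mathcal{C}\mid\langle a,M,\vec V\rangle$; typing (Par: disjoint split of linear $\Delta$; Pid: $\Gamma,a:\mathsf{ActorRef}(A);\Delta,a:A\vdash\mathcal{C}$ gives $\Gamma;\Delta\vdash(\nu a)\mathcal{C}$; Actor: $\Gamma,a:\mathsf{ActorRef}(A)\mid A\vdash M:\mathbf 1$ and $\Gamma,a:\mathsf{ActorRef}(A)\vdash V_i:A$ give $\Gamma,a:\mathsf{ActorRef}(A);a:A\vdash\langle a,M,\vec V\rangle$). $\lambda_{\mathrm{ch}}$: types $\mathbf 1\mid A\to B\mid\mathsf{Chan}(A)$; computations $V\,W\mid\mathbf{let}\ x\Leftarrow M\ \mathbf{in}\ N\mid\mathbf{return}\ V\mid\mathbf{fork}\ M\mid\mathbf{give}\ V\ W\mid\mathbf{take}\ V\mid\mathbf{newCh}$; configurations $\mathcal{C}\parallel\mathcal{D}\mid(\nu a)\mathcal{C}\mid a(\vec V)\mid M$ ($a(\vec V)$ a buffer). In both calculi: evaluation contexts $E::=[\,]\mid\mathbf{let}\ x\Leftarrow E\ \mathbf{in}\ M$; term reduction $(\lambda x.M)V\longrightarrow_{\mathsf{M}}M\{V/x\}$, $\mathbf{let}\ x\Leftarrow\mathbf{return}\ V\ \mathbf{in}\ M\longrightarrow_{\mathsf{M}}M\{V/x\}$, $E[M]\longrightarrow_{\mathsf{M}}E[M']$ if $M\longrightarrow_{\mathsf{M}}M'$;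 configuration contexts $G::=[\,]\mid G\parallel\mathcal{C}\mid(\nu a)G$; $\equiv$ is the least congruence closed under $G[-]$ with commutativity and associativity of $\parallel$ and $\mathcal{C}\parallel(\nu a)\mathcal{D}\equiv(\nu a)(\mathcal{C}\parallel\mathcal{D})$ if $a\notin\mathsf{fv}(\mathcal{C})$; configuration reduction $\longrightarrow$ is defined modulo $\equiv$ and closed under $G[-]$. $\lambda_{\mathrm{act}}$ reductions: $\langle a,E[\mathbf{spawn}\ M],\vec V\rangle\longrightarrow(\nu b)(\langle a,E[\mathbf{return}\ b],\vec V\rangle\parallel\langle b,M,\epsilon\rangle)$ ($b$ fresh); $\langle a,E[\mathbf{send}\ V'\ b],\vec V\rangle\parallel\langle b,M,\vec W\rangle\longrightarrow\langle a,E[\mathbf{return}\ ()],\vec V\rangle\parallel\langle b,M,\vec W\cdot V'\rangle$; $\langle a,E[\mathbf{send}\ V'\ a],\vec V\rangle\longrightarrow\langle a,E[\mathbf{return}\ ()],\vec V\cdot V'\rangle$; $\langle a,E[\mathbf{self}],\vec V\rangle\longrightarrow\langle a,E[\mathbf{return}\ a],\vec V\rangle$; $\langle a,E[\mathbf{receive}],W\cdot\vec V\rangle\longrightarrow\langle a,E[\mathbf{return}\ W],\vec V\rangle$; $\langle a,M_1,\vec V\rangle\longrightarrow\langle a,M_2,\vec V\rangle$ if $M_1\longrightarrow_{\mathsf{M}}M_2$. $\lambda_{\mathrm{ch}}$ reductions: $E[\mathbf{give}\ W\ a]\parallel a(\vec V)\longrightarrow E[\mathbf{return}\ ()]\parallel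 a(\vec V\cdot W)$; $E[\mathbf{take}\ a]\parallel a(W\cdot\vec V)\longrightarrow E[\mathbf{return}\ W]\parallel a(\vec V)$; $E[\mathbf{fork}\ M]\longrightarrow E[\mathbf{return}\ ()]\parallel M$; $E[\mathbf{newCh}]\longrightarrow(\nu a)(E[\mathbf{return}\ a]\parallel a(\epsilon))$ ($a$ fresh); $G[M_1]\longrightarrow G[M_2]$ if $M_1\longrightarrow_{\mathsf{M}}M_2$. $\longrightarrow^{*}$ is the reflexive–transitive closure. Translation $[\![-]\!]$ from $\lambda_{\mathrm{act}}$ to $\lambda_{\mathrm{ch}}$: values $[\![x]\!]=x$, $[\![a]\!]=a$, $[\![()]\!]=()$, $[\![\lambda x.M]\!]=\lambda x.\lambda ch.([\![M]\!]ch)$; computations parameterised by $ch$: $[\![\mathbf{let}\ x\Leftarrow M\ \mathbf{in}\ N]\!]ch=\mathbf{let}\ x\Leftarrow[\![M]\!]ch\ \mathbf{in}\ [\![N]\!]ch$, $[\![V\,W]\!]ch=\mathbf{let}\ f\Leftarrow([\![V]\!]\,[\![W]\!])\ \mathbf{in}\ f\,ch$, $[\![\mathbf{return}\ V]\!]ch=\mathbf{return}\ [\![V]\!]$, $[\![\mathbf{self}]\!]ch=\mathbf{return}\ ch$, $[\![\mathbf{receive}]\!]ch=\mathbf{take}\ ch$, $[\![\mathbf{spawn}\ M]\!]ch=\mathbf{let}\ chMb\Leftarrow\mathbf{newCh}\ \mathbf{in}\ \mathbf{let}\ y\Leftarrow\mathbf{fork}([\![M]\!]chMb)\ \mathbf{in}\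 \mathbf{return}\ chMb$, $[\![\mathbf{send}\ V\ W]\!]ch=\mathbf{give}\ [\![V]\!]\ [\![W]\!]$; configurations $[\![\mathcal{C}_1\parallel\mathcal{C}_2]\!]=[\![\mathcal{C}_1]\!]\parallel[\![\mathcal{C}_2]\!]$, $[\![(\nu a)\mathcal{C}]\!]=(\nu a)[\![\mathcal{C}]\!]$, $[\![\langle a,M,\vec V\rangle]\!]=a([\![\vec V]\!])\parallel([\![M]\!]a)$. *)

(* Variables are de Bruijn indices; names (actor / channel names) are
   first-order nats, bound only by (nu a) in configurations. *)
From Stdlib Require Import List Arith PeanoNat Permutation Relations.
Import ListNotations.

Definition name := nat.

Inductive aty : Type :=
| ATUnit : aty
| ATFun  : aty -> aty -> aty -> aty   (* ATFun A C B  =  A -C-> B *)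
| ATRef  : aty -> aty.

Inductive aval : Type :=
| AVar  : nat -> aval
| AName : name -> aval
| ALam  : acomp -> aval
| AUnit : aval
with acomp : Type :=
| AApp   : aval -> aval -> acomp
| ALet   : acomp -> acomp -> acomp   (* let x <= M in N  (x bound in N) *)
| ARet   : aval -> acomp
| ASpawn : acomp -> acomp
| ASend  : aval -> aval -> acomp     (* send V W : send message V to W *)
| AReceive : acomp
| ASelf  : acomp.

Fixpoint alift_v (k : nat) (V : aval) : aval :=
  match V with
  | AVar n => if n <? k then AVar n else AVar (S n)
  | AName a => AName a
  | ALam M => ALam (alift_c (S k) M)
  | AUnit => AUnit
  end
with alift_c (k : nat) (M : acomp) : acomp :=
  match M with
  | AApp V W => AApp (alift_v k V) (alift_v k W)
  | ALet M N => ALet (alift_c k M) (alift_c (S k) N)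
  | ARet V => ARet (alift_v k V)
  | ASpawn M => ASpawn (alift_c k M)
  | ASend V W => ASend (alift_v k V) (alift_v k W)
  | AReceive => AReceive
  | ASelf => ASelf
  end.

Fixpoint asubst_v (k : nat) (U : aval) (V : aval) : aval :=
  match V with
  | AVar n => if n =? k then U else if k <? n then AVar (pred n) else AVar n
  | AName a => AName a
  | ALam M => ALam (asubst_c (S k) (alift_v 0 U) M)
  | AUnit => AUnit
  end
with asubst_c (k : nat) (U : aval) (M : acomp) : acomp :=
  match M with
  | AApp V W => AApp (asubst_v k U V) (asubst_v k U W)
  | ALet M N => ALet (asubst_c k U M) (asubst_c (S k) (alift_v 0 U) N)
  | ARet V => ARet (asubst_v k U V)
  | ASpawn M => ASpawn (asubst_c k U M)
  | ASend V W => ASend (asubst_v k U V) (asubst_v k U W)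
  | AReceive => AReceive
  | ASelf => ASelf
  end.

Definition asubst (M : acomp) (V : aval) : acomp := asubst_c 0 V M.

Fixpoint afn_v (V : aval) : list name :=
  match V with
  | AVar _ => []
  | AName a => [a]
  | ALam M => afn_c M
  | AUnit => []
  end
with afn_c (M : acomp) : list name :=
  match M with
  | AApp V W => afn_v V ++ afn_v W
  | ALet M N => afn_c M ++ afn_c N
  | ARet V => afn_v V
  | ASpawn M => afn_c M
  | ASend V W => afn_v V ++ afn_v W
  | AReceive => []
  | ASelf => []
  end.

Inductive actx : Type :=
| AHole : actx
| ALetCtx : actx -> acomp -> actx.

Fixpoint aplug (E : actx) (M : acomp) : acomp :=
  match E with
  | AHole => M
  | ALetCtx E N => ALet (aplug E M) N
  end.

Inductive astep_t : acomp -> acomp -> Prop :=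
| AT_beta : forall M V, astep_t (AApp (ALam M) V) (asubst M V)
| AT_let  : forall V M, astep_t (ALet (ARet V) M) (asubst M V)
| AT_ctx  : forall E M M', astep_t M M' -> astep_t (aplug E M) (aplug E M').

Inductive aconf : Type :=
| APar   : aconf -> aconf -> aconf
| ANu    : name -> aconf -> aconf
| AActor : name -> acomp -> list aval -> aconf.

Fixpoint afn_conf (C : aconf) : list name :=
  match C with
  | APar C D => afn_conf C ++ afn_conf D
  | ANu a C => remove Nat.eq_dec a (afn_conf C)
  | AActor a M Vs => a :: afn_c M ++ flat_map afn_v Vs
  end.

Inductive acong : aconf -> aconf -> Prop :=
| AC_refl  : forall C, acong C C
| AC_sym   : forall C D, acong C D -> acong D C
| AC_trans : forall C D E, acong C D -> acong D E -> acong C E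
| AC_comm  : forall C D, acong (APar C D) (APar D C)
| AC_assoc : forall C D E, acong (APar C (APar D E)) (APar (APar C D) E)
| AC_extr  : forall a C D, ~ In a (afn_conf C) ->
    acong (APar C (ANu a D)) (ANu a (APar C D))
| AC_par   : forall C C' D, acong C C' -> acong (APar C D) (APar C' D)
| AC_nu    : forall a C C', acong C C' -> acong (ANu a C) (ANu a C').

Inductive astep : aconf -> aconf -> Prop :=
| AS_spawn : forall a E M Vs b,
    ~ In b (afn_conf (AActor a (aplug E (ASpawn M)) Vs)) ->
    astep (AActor a (aplug E (ASpawn M)) Vs)
          (ANu b (APar (AActor a (aplug E (ARet (AName b))) Vs)
                       (AActor b M [])))
| AS_send : forall a E V' b Vs M Ws,
    astep (APar (AActor a (aplug E (ASend V' (AName b))) Vs) (AActor b M Ws))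
          (APar (AActor a (aplug E (ARet AUnit)) Vs) (AActor b M (Ws ++ [V'])))
| AS_send_self : forall a E V' Vs,
    astep (AActor a (aplug E (ASend V' (AName a))) Vs)
          (AActor a (aplug E (ARet AUnit)) (Vs ++ [V']))
| AS_self : forall a E Vs,
    astep (AActor a (aplug E ASelf) Vs) (AActor a (aplug E (ARet (AName a))) Vs)
| AS_receive : forall a E W Vs,
    astep (AActor a (aplug E AReceive) (W :: Vs)) (AActor a (aplug E (ARet W)) Vs)
| AS_term : forall a M1 M2 Vs,
    astep_t M1 M2 -> astep (AActor a M1 Vs) (AActor a M2 Vs)
| AS_par : forall C C' D, astep C C' -> astep (APar C D) (APar C' D)
| AS_nu  : forall a C C', astep C C' -> astep (ANu a C) (ANu a C')
| AS_cong : forall C C' D' D,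
    acong C C' -> astep C' D' -> acong D' D -> astep C D.

(* Gamma is split into a variable context (list, de Bruijn) and a
   name context (partial map); Delta is a linear list of (name, type). *)
Definition nctx := name -> option aty.

Definition nupd (G : nctx) (a : name) (T : aty) : nctx :=
  fun b => if Nat.eqb b a then Some T else G b.

Inductive aty_v : list aty -> nctx -> aval -> aty -> Prop :=
| ATV_var  : forall Gv Gn n T, nth_error Gv n = Some T -> aty_v Gv Gn (AVar n) T
| ATV_name : forall Gv Gn a T, Gn a = Some T -> aty_v Gv Gn (AName a) T
| ATV_lam  : forall Gv Gn M A C B,
    aty_c (A :: Gv) Gn C M B -> aty_v Gv Gn (ALam M) (ATFun A C B)
| ATV_unit : forall Gv Gn, aty_v Gv Gn AUnit ATUnit
(* aty_c Gv Gn C M A  :  Gamma | C |- M : A *)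
with aty_c : list aty -> nctx -> aty -> acomp -> aty -> Prop :=
| ATC_app : forall Gv Gn C V W A B,
    aty_v Gv Gn V (ATFun A C B) -> aty_v Gv Gn W A -> aty_c Gv Gn C (AApp V W) B
| ATC_let : forall Gv Gn C M N A B,
    aty_c Gv Gn C M A -> aty_c (A :: Gv) Gn C N B -> aty_c Gv Gn C (ALet M N) B
| ATC_ret : forall Gv Gn C V A, aty_v Gv Gn V A -> aty_c Gv Gn C (ARet V) A
| ATC_send : forall Gv Gn C V W A,
    aty_v Gv Gn V A -> aty_v Gv Gn W (ATRef A) -> aty_c Gv Gn C (ASend V W) ATUnit
| ATC_receive : forall Gv Gn A, aty_c Gv Gn A AReceive A
| ATC_spawn : forall Gv Gn C M A,
    aty_c Gv Gn A M ATUnit -> aty_c Gv Gn C (ASpawn M) (ATRef A)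
| ATC_self : forall Gv Gn A, aty_c Gv Gn A ASelf (ATRef A).

Definition ldom (D : list (name * aty)) : list name := map fst D.

Inductive aty_conf : list aty -> nctx -> list (name * aty) -> aconf -> Prop :=
| ATF_par : forall Gv Gn D D1 D2 C1 C2,
    Permutation D (D1 ++ D2) ->
    (forall a, In a (ldom D1) -> ~ In a (ldom D2)) ->
    aty_conf Gv Gn D1 C1 -> aty_conf Gv Gn D2 C2 ->
    aty_conf Gv Gn D (APar C1 C2)
| ATF_pid : forall Gv Gn D a A C,
    ~ In a (ldom D) ->
    aty_conf Gv (nupd Gn a (ATRef A)) (D ++ [(a, A)]) C ->
    aty_conf Gv Gn D (ANu a C)
| ATF_actor : forall Gv Gn a A M Vs,
    Gn a = Some (ATRef A) ->
    aty_c Gv Gn A M ATUnit ->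
    Forall (fun V => aty_v Gv Gn V A) Vs ->
    aty_conf Gv Gn [(a, A)] (AActor a M Vs).

Inductive cval : Type :=
| CVar  : nat -> cval
| CName : name -> cval
| CLam  : ccomp -> cval
| CUnit : cval
with ccomp : Type :=
| CApp  : cval -> cval -> ccomp
| CLet  : ccomp -> ccomp -> ccomp
| CRet  : cval -> ccomp
| CFork : ccomp -> ccomp
| CGive : cval -> cval -> ccomp    (* give W a : put W into channel a *)
| CTake : cval -> ccomp
| CNewCh : ccomp.

Fixpoint clift_v (k : nat) (V : cval) : cval :=
  match V with
  | CVar n => if n <? k then CVar n else CVar (S n)
  | CName a => CName a
  | CLam M => CLam (clift_c (S k) M)
  | CUnit => CUnit
  end
with clift_c (k : nat) (M : ccomp) : ccomp :=
  match M with
  | CApp V W => CApp (clift_v k V) (clift_v k W)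
  | CLet M N => CLet (clift_c k M) (clift_c (S k) N)
  | CRet V => CRet (clift_v k V)
  | CFork M => CFork (clift_c k M)
  | CGive V W => CGive (clift_v k V) (clift_v k W)
  | CTake V => CTake (clift_v k V)
  | CNewCh => CNewCh
  end.

Fixpoint csubst_v (k : nat) (U : cval) (V : cval) : cval :=
  match V with
  | CVar n => if n =? k then U else if k <? n then CVar (pred n) else CVar n
  | CName a => CName a
  | CLam M => CLam (csubst_c (S k) (clift_v 0 U) M)
  | CUnit => CUnit
  end
with csubst_c (k : nat) (U : cval) (M : ccomp) : ccomp :=
  match M with
  | CApp V W => CApp (csubst_v k U V) (csubst_v k U W)
  | CLet M N => CLet (csubst_c k U M) (csubst_c (S k) (clift_v 0 U) N)
  | CRet V => CRet (csubst_v k U V)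
  | CFork M => CFork (csubst_c k U M)
  | CGive V W => CGive (csubst_v k U V) (csubst_v k U W)
  | CTake V => CTake (csubst_v k U V)
  | CNewCh => CNewCh
  end.

Definition csubst (M : ccomp) (V : cval) : ccomp := csubst_c 0 V M.

Fixpoint cfn_v (V : cval) : list name :=
  match V with
  | CVar _ => []
  | CName a => [a]
  | CLam M => cfn_c M
  | CUnit => []
  end
with cfn_c (M : ccomp) : list name :=
  match M with
  | CApp V W => cfn_v V ++ cfn_v W
  | CLet M N => cfn_c M ++ cfn_c N
  | CRet V => cfn_v V
  | CFork M => cfn_c M
  | CGive V W => cfn_v V ++ cfn_v W
  | CTake V => cfn_v V
  | CNewCh => []
  end.

Inductive cctx : Type :=
| CHole : cctx
| CLetCtx : cctx -> ccomp -> cctx.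

Fixpoint cplug (E : cctx) (M : ccomp) : ccomp :=
  match E with
  | CHole => M
  | CLetCtx E N => CLet (cplug E M) N
  end.

Inductive cstep_t : ccomp -> ccomp -> Prop :=
| CT_beta : forall M V, cstep_t (CApp (CLam M) V) (csubst M V)
| CT_let  : forall V M, cstep_t (CLet (CRet V) M) (csubst M V)
| CT_ctx  : forall E M M', cstep_t M M' -> cstep_t (cplug E M) (cplug E M').

Inductive cconf : Type :=
| CPar    : cconf -> cconf -> cconf
| CNu     : name -> cconf -> cconf
| CBuf    : name -> list cval -> cconf
| CThread : ccomp -> cconf.

Fixpoint cfn_conf (C : cconf) : list name :=
  match C with
  | CPar C D => cfn_conf C ++ cfn_conf D
  | CNu a C => remove Nat.eq_dec a (cfn_conf C)
  | CBuf a Vs => a :: flat_map cfn_v Vs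
  | CThread M => cfn_c M
  end.

Inductive ccong : cconf -> cconf -> Prop :=
| CC_refl  : forall C, ccong C C
| CC_sym   : forall C D, ccong C D -> ccong D C
| CC_trans : forall C D E, ccong C D -> ccong D E -> ccong C E
| CC_comm  : forall C D, ccong (CPar C D) (CPar D C)
| CC_assoc : forall C D E, ccong (CPar C (CPar D E)) (CPar (CPar C D) E)
| CC_extr  : forall a C D, ~ In a (cfn_conf C) ->
    ccong (CPar C (CNu a D)) (CNu a (CPar C D))
| CC_par   : forall C C' D, ccong C C' -> ccong (CPar C D) (CPar C' D)
| CC_nu    : forall a C C', ccong C C' -> ccong (CNu a C) (CNu a C').

Inductive cstep : cconf -> cconf -> Prop :=
| CS_give : forall E W a Vs,
    cstep (CPar (CThread (cplug E (CGive W (CName a)))) (CBuf a Vs))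
          (CPar (CThread (cplug E (CRet CUnit))) (CBuf a (Vs ++ [W])))
| CS_take : forall E a W Vs,
    cstep (CPar (CThread (cplug E (CTake (CName a)))) (CBuf a (W :: Vs)))
          (CPar (CThread (cplug E (CRet W))) (CBuf a Vs))
| CS_fork : forall E M,
    cstep (CThread (cplug E (CFork M)))
          (CPar (CThread (cplug E (CRet CUnit))) (CThread M))
| CS_newch : forall E a,
    ~ In a (cfn_c (cplug E CNewCh)) ->
    cstep (CThread (cplug E CNewCh))
          (CNu a (CPar (CThread (cplug E (CRet (CName a)))) (CBuf a [])))
| CS_term : forall M1 M2, cstep_t M1 M2 -> cstep (CThread M1) (CThread M2)
| CS_par : forall C C' D, cstep C C' -> cstep (CPar C D) (CPar C' D)
| CS_nu  : forall a C C', cstep C C' -> cstep (CNu a C) (CNu a C')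
| CS_cong : forall C C' D' D,
    ccong C C' -> cstep C' D' -> ccong D' D -> cstep C D.

Definition csteps : cconf -> cconf -> Prop := clos_refl_trans cconf cstep.

(* The translation introduces extra binders (ch, f, chMb, y); source
   variables are therefore mapped through a renaming r. *)

Definition up_ren (r : nat -> nat) : nat -> nat :=
  fun n => match n with 0 => 0 | S m => S (r m) end.

Fixpoint tr_v (r : nat -> nat) (V : aval) : cval :=
  match V with
  | AVar n => CVar (r n)
  | AName a => CName a
  (* [[lambda x. M]] = lambda x. return (lambda ch. [[M]] ch) *)
  | ALam M => CLam (CRet (CLam (tr_c (fun n => S (up_ren r n)) M (CVar 0))))
  | AUnit => CUnit
  end
with tr_c (r : nat -> nat) (M : acomp) (ch : cval) : ccomp :=
  match M with
  (* let f <= ([[V]] [[W]]) in f ch *)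
  | AApp V W => CLet (CApp (tr_v r V) (tr_v r W)) (CApp (CVar 0) (clift_v 0 ch))
  | ALet M N => CLet (tr_c r M ch) (tr_c (up_ren r) N (clift_v 0 ch))
  | ARet V => CRet (tr_v r V)
  | ASelf => CRet ch
  | AReceive => CTake ch
  (* let chMb <= newCh in let y <= fork ([[M]] chMb) in return chMb *)
  | ASpawn M =>
      CLet CNewCh (CLet (CFork (tr_c (fun n => S (r n)) M (CVar 0))) (CRet (CVar 1)))
  | ASend V W => CGive (tr_v r V) (tr_v r W)
  end.

Definition trans_val (V : aval) : cval := tr_v (fun n => n) V.
Definition trans_comp (M : acomp) (ch : cval) : ccomp := tr_c (fun n => n) M ch.

Fixpoint trans_conf (C : aconf) : cconf :=
  match C with
  | APar C1 C2 => CPar (trans_conf C1) (trans_conf C2)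
  | ANu a C => CNu a (trans_conf C)
  | AActor a M Vs =>
      CPar (CBuf a (map trans_val Vs)) (CThread (trans_comp M (CName a)))
  end.

(* An actor <a, M, V> is translated to a buffer a(V) running beside the thread
   [[M]]a, so each actor reduction is matched by a few channel reductions:
   send, receive and self become a single give, take, or nothing; a beta or let
   step takes at most three term steps; spawn becomes newCh, let, fork and let.
   The result is [[C2]] up to reordering of parallel components and, for spawn,
   one scope extrusion; structural congruence itself is preserved because the
   translation introduces no free names.  The substance lies in the term steps,
   which need the translation to commute with substitution; with de Bruijn
   indices this is proved for a translation generalised from variable renamings
   to arbitrary environments of channel-calculus values. *)

From Stdlib Require Import List PeanoNat Relations Lia.
Import ListNotations.

Scheme aval_mind := Induction for aval Sort Prop
  with acomp_mind := Induction for acomp Sort Prop.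
Combined Scheme asyntax_mind from aval_mind, acomp_mind.
Scheme cval_mind := Induction for cval Sort Prop
  with ccomp_mind := Induction for ccomp Sort Prop.
Combined Scheme csyntax_mind from cval_mind, ccomp_mind.

Fixpoint cren_v (xi : nat -> nat) (V : cval) : cval :=
  match V with
  | CVar n => CVar (xi n)
  | CName a => CName a
  | CLam M => CLam (cren_c (up_ren xi) M)
  | CUnit => CUnit
  end
with cren_c (xi : nat -> nat) (M : ccomp) : ccomp :=
  match M with
  | CApp V W => CApp (cren_v xi V) (cren_v xi W)
  | CLet M N => CLet (cren_c xi M) (cren_c (up_ren xi) N)
  | CRet V => CRet (cren_v xi V)
  | CFork M => CFork (cren_c xi M)
  | CGive V W => CGive (cren_v xi V) (cren_v xi W)
  | CTake V => CTake (cren_v xi V)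
  | CNewCh => CNewCh
  end.

Definition up_sub (s : nat -> cval) (n : nat) : cval :=
  match n with 0 => CVar 0 | S m => cren_v S (s m) end.

Fixpoint csub_v (s : nat -> cval) (V : cval) : cval :=
  match V with
  | CVar n => s n
  | CName a => CName a
  | CLam M => CLam (csub_c (up_sub s) M)
  | CUnit => CUnit
  end
with csub_c (s : nat -> cval) (M : ccomp) : ccomp :=
  match M with
  | CApp V W => CApp (csub_v s V) (csub_v s W)
  | CLet M N => CLet (csub_c s M) (csub_c (up_sub s) N)
  | CRet V => CRet (csub_v s V)
  | CFork M => CFork (csub_c s M)
  | CGive V W => CGive (csub_v s V) (csub_v s W)
  | CTake V => CTake (csub_v s V)
  | CNewCh => CNewCh
  end.

Definition bump (k n : nat) : nat := if n <? k then n else S n.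

Definition insert_at {T : Type} (k : nat) (x : T) (r : nat -> T) (n : nat) : T :=
  if n =? k then x else if k <? n then r (pred n) else r n.

Ltac nat_cases :=
  repeat match goal with
  | |- context [Nat.ltb ?a ?b] => destruct (Nat.ltb_spec a b)
  | |- context [Nat.eqb ?a ?b] => destruct (Nat.eqb_spec a b)
  end; try (exfalso; lia); try reflexivity; try (f_equal; lia).

Lemma cren_ext :
  (forall V xi zeta, (forall n, xi n = zeta n) -> cren_v xi V = cren_v zeta V) /\
  (forall M xi zeta, (forall n, xi n = zeta n) -> cren_c xi M = cren_c zeta M).
Proof.
  apply csyntax_mind; intros; simpl; f_equal; eauto;
    match goal with IH : _ |- _ => apply IH; intros [|n]; simpl; auto end.
Qed.

Lemma csub_ext :
  (forall V s t, (forall n, s n = t n) -> csub_v s V = csub_v t V) /\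
  (forall M s t, (forall n, s n = t n) -> csub_c s M = csub_c t M).
Proof.
  apply csyntax_mind; intros; simpl; f_equal; eauto;
    match goal with IH : _ |- _ => apply IH; intros [|n]; simpl; f_equal; auto end.
Qed.

Lemma clift_cren :
  (forall V k, clift_v k V = cren_v (bump k) V) /\
  (forall M k, clift_c k M = cren_c (bump k) M).
Proof.
  apply csyntax_mind; intros; simpl; f_equal; eauto;
    try (unfold bump; nat_cases; fail);
    match goal with IH : _ |- _ =>
      rewrite IH; apply cren_ext; intros [|n]; unfold bump; simpl; nat_cases end.
Qed.

Lemma cren_cren :
  (forall V xi zeta, cren_v xi (cren_v zeta V) = cren_v (fun n => xi (zeta n)) V) /\
  (forall M xi zeta, cren_c xi (cren_c zeta M) = cren_c (fun n => xi (zeta n)) M).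
Proof.
  apply csyntax_mind; intros; simpl; f_equal; eauto;
    match goal with IH : _ |- _ =>
      rewrite IH; apply cren_ext; intros [|n]; reflexivity end.
Qed.

Lemma csub_cren :
  (forall V s xi, csub_v s (cren_v xi V) = csub_v (fun n => s (xi n)) V) /\
  (forall M s xi, csub_c s (cren_c xi M) = csub_c (fun n => s (xi n)) M).
Proof.
  apply csyntax_mind; intros; simpl; f_equal; eauto;
    match goal with IH : _ |- _ =>
      rewrite IH; apply csub_ext; intros [|n]; reflexivity end.
Qed.

Lemma cren_csub :
  (forall V s xi, cren_v xi (csub_v s V) = csub_v (fun n => cren_v xi (s n)) V) /\
  (forall M s xi, cren_c xi (csub_c s M) = csub_c (fun n => cren_v xi (s n)) M).
Proof.
  apply csyntax_mind; intros; simpl; f_equal; eauto;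
    match goal with IH : _ |- _ =>
      rewrite IH; apply csub_ext; intros [|n]; simpl; auto;
      rewrite !(proj1 cren_cren); apply cren_ext; reflexivity end.
Qed.

Lemma csub_id :
  (forall V s, (forall n, s n = CVar n) -> csub_v s V = V) /\
  (forall M s, (forall n, s n = CVar n) -> csub_c s M = M).
Proof.
  apply csyntax_mind; intros; simpl; f_equal; eauto;
    match goal with IH : _ |- _ =>
      apply IH; intros [|n]; simpl; auto;
      match goal with Hs : _ |- _ => rewrite Hs; reflexivity end end.
Qed.

Lemma csubst_csub :
  (forall V k U, csubst_v k U V = csub_v (insert_at k U CVar) V) /\
  (forall M k U, csubst_c k U M = csub_c (insert_at k U CVar) M).
Proof.
  apply csyntax_mind; intros; simpl; f_equal; eauto;
    try (unfold insert_at; nat_cases; fail);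
    match goal with IH : _ |- _ =>
      rewrite IH; apply csub_ext; intros [|n]; unfold insert_at; simpl; nat_cases;
      try (destruct n; [lia | reflexivity]);
      rewrite (proj1 clift_cren); apply cren_ext; reflexivity end.
Qed.

(* The translation with the renaming [r] replaced by an environment of
   lambda_ch values ([tr_trs]); unlike [tr_v], this form is closed under
   substitution ([csub_trs], [trs_asubst]). *)
Fixpoint trs_v (r : nat -> cval) (V : aval) : cval :=
  match V with
  | AVar n => r n
  | AName a => CName a
  | ALam M => CLam (CRet (CLam (trs_c (fun n => cren_v S (up_sub r n)) M (CVar 0))))
  | AUnit => CUnit
  end
with trs_c (r : nat -> cval) (M : acomp) (ch : cval) : ccomp :=
  match M with
  | AApp V W => CLet (CApp (trs_v r V) (trs_v r W)) (CApp (CVar 0) (cren_v S ch))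
  | ALet M N => CLet (trs_c r M ch) (trs_c (up_sub r) N (cren_v S ch))
  | ARet V => CRet (trs_v r V)
  | ASelf => CRet ch
  | AReceive => CTake ch
  | ASpawn M =>
      CLet CNewCh
        (CLet (CFork (trs_c (fun n => cren_v S (r n)) M (CVar 0))) (CRet (CVar 1)))
  | ASend V W => CGive (trs_v r V) (trs_v r W)
  end.

Ltac peel_constructors :=
  repeat match goal with
  | |- CRet _ = CRet _ => f_equal
  | |- CLam _ = CLam _ => f_equal
  | |- CFork _ = CFork _ => f_equal
  | |- CLet _ _ = CLet _ _ => f_equal
  | |- CApp _ _ = CApp _ _ => f_equal
  | |- CGive _ _ = CGive _ _ => f_equal
  | |- CTake _ = CTake _ => f_equal
  end.

Lemma trs_ext :
  (forall V r t, (forall n, r n = t n) -> trs_v r V = trs_v t V) /\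
  (forall M r t ch, (forall n, r n = t n) -> trs_c r M ch = trs_c t M ch).
Proof.
  apply asyntax_mind; intros; simpl; peel_constructors; eauto;
    match goal with IH : _, Hrt : forall n, _ = _ |- _ =>
      apply IH; intros [|n]; simpl; rewrite ?Hrt; reflexivity end.
Qed.

Lemma tr_trs :
  (forall V r, tr_v r V = trs_v (fun n => CVar (r n)) V) /\
  (forall M r ch, tr_c r M ch = trs_c (fun n => CVar (r n)) M ch).
Proof.
  apply asyntax_mind; intros; simpl; peel_constructors; eauto;
    try (rewrite (proj1 clift_cren); apply cren_ext; reflexivity);
    match goal with IH : _ |- _ =>
      rewrite IH; try rewrite (proj1 clift_cren);
      try (apply (proj2 trs_ext); intros [|n]; reflexivity) end.
Qed.

Lemma cren_trs :
  (forall V r xi, cren_v xi (trs_v r V) = trs_v (fun n => cren_v xi (r n)) V) /\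
  (forall M r ch xi,
     cren_c xi (trs_c r M ch) = trs_c (fun n => cren_v xi (r n)) M (cren_v xi ch)).
Proof.
  apply asyntax_mind; intros; simpl; peel_constructors; eauto;
    try (rewrite !(proj1 cren_cren); apply cren_ext; reflexivity);
    match goal with IH : _ |- _ =>
      rewrite IH, ?(proj1 cren_cren); simpl;
      apply (proj2 trs_ext); intros [|n]; simpl; auto;
      rewrite !(proj1 cren_cren); apply cren_ext; reflexivity end.
Qed.

Lemma csub_trs :
  (forall V r s, csub_v s (trs_v r V) = trs_v (fun n => csub_v s (r n)) V) /\
  (forall M r ch s,
     csub_c s (trs_c r M ch) = trs_c (fun n => csub_v s (r n)) M (csub_v s ch)).
Proof.
  apply asyntax_mind; intros; simpl; peel_constructors; eauto;
    try (rewrite (proj1 csub_cren), (proj1 cren_csub); apply csub_ext; reflexivity);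
    match goal with IH : _ |- _ =>
      rewrite IH, ?(proj1 csub_cren), ?(proj1 cren_csub); simpl;
      apply (proj2 trs_ext); intros [|n]; simpl; auto;
      rewrite ?(proj1 csub_cren), ?(proj1 cren_csub); simpl;
      rewrite ?(proj1 csub_cren), ?(proj1 cren_csub); apply csub_ext; reflexivity end.
Qed.

Lemma trs_alift :
  (forall V r k, trs_v r (alift_v k V) = trs_v (fun n => r (bump k n)) V) /\
  (forall M r ch k, trs_c r (alift_c k M) ch = trs_c (fun n => r (bump k n)) M ch).
Proof.
  apply asyntax_mind; intros; simpl; peel_constructors; eauto;
    try (unfold bump; nat_cases; fail);
    match goal with IH : _ |- _ =>
      rewrite IH; apply (proj2 trs_ext); intros [|n]; unfold bump; simpl; nat_cases end.
Qed.

Lemma trs_asubst :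
  (forall V r k U, trs_v r (asubst_v k U V) = trs_v (insert_at k (trs_v r U) r) V) /\
  (forall M r ch k U,
     trs_c r (asubst_c k U M) ch = trs_c (insert_at k (trs_v r U) r) M ch).
Proof.
  apply asyntax_mind; intros; simpl; peel_constructors; eauto;
    try (unfold insert_at; nat_cases; fail);
    match goal with IH : _ |- _ =>
      rewrite IH; apply (proj2 trs_ext); intros [|n]; cbn [up_sub]; unfold insert_at;
      nat_cases; try (destruct n; [lia | reflexivity]);
      rewrite ?(proj1 trs_alift), !(proj1 cren_trs); reflexivity end.
Qed.

(* The left-hand sides are the terms reached by reducing the translations of
   [(lambda x. M) V] and [let x <= return V in M], and the forked thread of
   the translation of [spawn M]. *)
Lemma trans_comp_beta M V a :
  csubst (csubst_c 1 (clift_v 0 (trans_val V))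
            (tr_c (fun n => S (up_ren (fun n => n) n)) M (CVar 0))) (CName a)
  = trans_comp (asubst M V) (CName a).
Proof.
  unfold csubst, trans_comp, trans_val, asubst.
  rewrite !(proj2 tr_trs), (proj1 tr_trs), (proj2 trs_asubst),
    !(proj2 csubst_csub), !(proj2 csub_trs).
  apply (proj2 trs_ext); intros [|n]; unfold insert_at; simpl; auto.
  rewrite (proj1 clift_cren), (proj1 csub_cren).
  apply (proj1 csub_id); reflexivity.
Qed.

Lemma trans_comp_let M V a :
  csubst (tr_c (up_ren (fun n => n)) M (clift_v 0 (CName a))) (trans_val V)
  = trans_comp (asubst M V) (CName a).
Proof.
  unfold csubst, trans_comp, trans_val, asubst.
  rewrite !(proj2 tr_trs), (proj1 tr_trs), (proj2 trs_asubst),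
    (proj2 csubst_csub), (proj2 csub_trs).
  apply (proj2 trs_ext); intros [|n]; reflexivity.
Qed.

Lemma trans_comp_spawn M b :
  csubst (tr_c (fun n => S n) M (CVar 0)) (CName b) = trans_comp M (CName b).
Proof.
  unfold csubst, trans_comp.
  rewrite !(proj2 tr_trs), (proj2 csubst_csub), (proj2 csub_trs).
  apply (proj2 trs_ext); reflexivity.
Qed.

Lemma cfn_clift :
  (forall V k, cfn_v (clift_v k V) = cfn_v V) /\
  (forall M k, cfn_c (clift_c k M) = cfn_c M).
Proof.
  apply csyntax_mind; intros; simpl; rewrite ?H, ?H0; auto.
  destruct (n <? k); reflexivity.
Qed.

Lemma cfn_tr :
  (forall V r x, In x (cfn_v (tr_v r V)) -> In x (afn_v V)) /\
  (forall M r ch x, In x (cfn_c (tr_c r M ch)) -> In x (afn_c M) \/ In x (cfn_v ch)).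
Proof.
  apply asyntax_mind; simpl; intros;
    repeat rewrite in_app_iff in *; rewrite ?(proj1 cfn_clift) in *; simpl in *;
    repeat match goal with
    | H : _ \/ _ |- _ => destruct H
    | H : False |- _ => destruct H
    | IH : forall r x, In x (cfn_v (tr_v r ?V)) -> _,
      H : In ?x (cfn_v (tr_v ?r ?V)) |- _ => apply IH in H
    | IH : forall r ch x, In x (cfn_c (tr_c r ?M ch)) -> _,
      H : In ?x (cfn_c (tr_c ?r ?M ?ch)) |- _ =>
        apply IH in H; simpl in H; rewrite ?(proj1 cfn_clift) in H
    end; tauto.
Qed.

Lemma cfn_trans_val V x : In x (cfn_v (trans_val V)) -> In x (afn_v V).
Proof. apply (proj1 cfn_tr). Qed.

Lemma cfn_trans_comp M a x :
  In x (cfn_c (trans_comp M (CName a))) -> In x (afn_c M) \/ x = a.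
Proof.
  intros Hx; apply (proj2 cfn_tr) in Hx as [Hx | [<- | []]]; auto.
Qed.

Lemma cfn_trans_vals Vs x :
  In x (flat_map cfn_v (map trans_val Vs)) -> In x (flat_map afn_v Vs).
Proof.
  rewrite flat_map_concat_map, map_map, <- flat_map_concat_map, !in_flat_map.
  intros [V [HV Hx]]; eauto using cfn_trans_val.
Qed.

Lemma cfn_trans_conf C x : In x (cfn_conf (trans_conf C)) -> In x (afn_conf C).
Proof.
  induction C as [C1 IH1 C2 IH2 | b C IH | a M Vs]; simpl; intros Hx.
  - rewrite in_app_iff in *; destruct Hx; auto.
  - apply in_remove in Hx as [Hx Hne]; apply in_in_remove; auto.
  - rewrite in_app_iff in Hx; simpl in Hx; simpl; rewrite in_app_iff.
    destruct Hx as [Hx | [Hx | Hx]]; auto.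
    + right; right; apply cfn_trans_vals; assumption.
    + apply cfn_trans_comp in Hx as [Hx | ->]; auto.
Qed.

Lemma trans_conf_ccong C D : acong C D -> ccong (trans_conf C) (trans_conf D).
Proof.
  induction 1; simpl; eauto using ccong.
  apply CC_extr; intros Hx; apply cfn_trans_conf in Hx; contradiction.
Qed.

Lemma ccong_par_r X Y Y' : ccong Y Y' -> ccong (CPar X Y) (CPar X Y').
Proof.
  intros HY. eapply CC_trans; [apply CC_comm |].
  eapply CC_trans; [apply CC_par, HY | apply CC_comm].
Qed.

Lemma ccong_par_shuffle A B C D :
  ccong (CPar (CPar A B) (CPar C D)) (CPar (CPar B C) (CPar A D)).
Proof.
  eapply CC_trans; [apply CC_sym, CC_assoc |].
  eapply CC_trans; [apply ccong_par_r, CC_assoc |].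
  eapply CC_trans; [apply CC_comm |].
  eapply CC_trans; [apply CC_sym, CC_assoc |].
  apply ccong_par_r, CC_comm.
Qed.

Lemma cstep_par_r X Y Z : cstep X Y -> cstep (CPar Z X) (CPar Z Y).
Proof. intros H. eapply CS_cong; [apply CC_comm | apply CS_par, H | apply CC_comm]. Qed.

Lemma csteps_par_l X Y Z : csteps X Y -> csteps (CPar X Z) (CPar Y Z).
Proof.
  induction 1;
    [apply rt_step, CS_par; assumption | apply rt_refl | eapply rt_trans; eassumption].
Qed.

Lemma csteps_par_r X Y Z : csteps X Y -> csteps (CPar Z X) (CPar Z Y).
Proof.
  induction 1;
    [apply rt_step, cstep_par_r; assumption | apply rt_refl | eapply rt_trans; eassumption].
Qed.

Lemma csteps_nu a X Y : csteps X Y -> csteps (CNu a X) (CNu a Y).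
Proof.
  induction 1;
    [apply rt_step, CS_nu; assumption | apply rt_refl | eapply rt_trans; eassumption].
Qed.

Lemma csteps_thread M N : clos_trans _ cstep_t M N -> csteps (CThread M) (CThread N).
Proof.
  induction 1; [apply rt_step, CS_term; assumption | eapply rt_trans; eassumption].
Qed.

Lemma cstep_t_plus_cplug E M N :
  clos_trans _ cstep_t M N -> clos_trans _ cstep_t (cplug E M) (cplug E N).
Proof.
  induction 1; [apply t_step, CT_ctx; assumption | eapply t_trans; eassumption].
Qed.

Fixpoint cctx_comp (E1 E2 : cctx) : cctx :=
  match E1 with
  | CHole => E2
  | CLetCtx E N => CLetCtx (cctx_comp E E2) N
  end.

Lemma cplug_comp E1 E2 M : cplug (cctx_comp E1 E2) M = cplug E1 (cplug E2 M).
Proof. induction E1; simpl; congruence. Qed.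

Lemma cstep_let_ret E V N :
  cstep (CThread (cplug E (CLet (CRet V) N))) (CThread (cplug E (csubst N V))).
Proof. apply CS_term, CT_ctx, CT_let. Qed.

Lemma cstep_let_newch E N b :
  ~ In b (cfn_c (cplug E (CLet CNewCh N))) ->
  cstep (CThread (cplug E (CLet CNewCh N)))
        (CNu b (CPar (CThread (cplug E (CLet (CRet (CName b)) N))) (CBuf b []))).
Proof.
  pose proof (CS_newch (cctx_comp E (CLetCtx CHole N)) b) as H.
  rewrite !cplug_comp in H; exact H.
Qed.

Lemma cstep_let_fork E M N :
  cstep (CThread (cplug E (CLet (CFork M) N)))
        (CPar (CThread (cplug E (CLet (CRet CUnit) N))) (CThread M)).
Proof.
  pose proof (CS_fork (cctx_comp E (CLetCtx CHole N)) M) as H.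
  rewrite !cplug_comp in H; exact H.
Qed.

Lemma csteps_spawn_encoding E M b :
  ~ In b (cfn_c (cplug E (CLet CNewCh (CLet (CFork M) (CRet (CVar 1)))))) ->
  csteps (CThread (cplug E (CLet CNewCh (CLet (CFork M) (CRet (CVar 1))))))
         (CNu b (CPar (CPar (CThread (cplug E (CRet (CName b))))
                            (CThread (csubst M (CName b))))
                      (CBuf b []))).
Proof.
  intros Hb.
  eapply rt_trans; [apply rt_step, cstep_let_newch, Hb |].
  apply csteps_nu.
  eapply rt_trans; [apply csteps_par_l, rt_step, cstep_let_ret |].
  eapply rt_trans; [apply csteps_par_l, rt_step, cstep_let_fork |].
  apply csteps_par_l, csteps_par_l, rt_step, cstep_let_ret.
Qed.

Fixpoint trans_actx (r : nat -> nat) (E : actx) (ch : cval) : cctx :=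
  match E with
  | AHole => CHole
  | ALetCtx E N => CLetCtx (trans_actx r E ch) (tr_c (up_ren r) N (clift_v 0 ch))
  end.

Lemma tr_aplug E r M ch : tr_c r (aplug E M) ch = cplug (trans_actx r E ch) (tr_c r M ch).
Proof. induction E; simpl; congruence. Qed.

Lemma trans_comp_step_t M1 M2 a :
  astep_t M1 M2 ->
  clos_trans _ cstep_t (trans_comp M1 (CName a)) (trans_comp M2 (CName a)).
Proof.
  induction 1 as [M V | V M | E M M' _ IH].
  - rewrite <- trans_comp_beta; unfold trans_comp; simpl.
    eapply t_trans.
    { apply t_step, (CT_ctx (CLetCtx CHole (CApp (CVar 0) (CName a)))), CT_beta. }
    eapply t_trans; [apply t_step, CT_let | apply t_step, CT_beta].
  - rewrite <- trans_comp_let; apply t_step, CT_let.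
  - unfold trans_comp in *; rewrite !tr_aplug; apply cstep_t_plus_cplug, IH.
Qed.

Definition csteps_upto (X Y : cconf) : Prop := exists Z, csteps X Z /\ ccong Z Y.

Lemma csteps_upto_of_csteps X Y : csteps X Y -> csteps_upto X Y.
Proof. intros H; exists Y; split; [exact H | apply CC_refl]. Qed.

Lemma csteps_upto_ccong X X' Y' Y :
  ccong X X' -> csteps_upto X' Y' -> ccong Y' Y -> csteps_upto X Y.
Proof.
  intros HX [Z [Hsteps HZ]] HY.
  apply clos_rt_rt1n in Hsteps; destruct Hsteps as [| X1 Z Hstep Hsteps].
  - exists X; split; [apply rt_refl | eauto using CC_trans].
  - exists Z; split; [| eauto using CC_trans].
    eapply rt_trans; [apply rt_step | apply clos_rt1n_rt, Hsteps].
    eapply CS_cong; [exact HX | exact Hstep | apply CC_refl].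
Qed.

Lemma csteps_upto_par X Y Z : csteps_upto X Y -> csteps_upto (CPar X Z) (CPar Y Z).
Proof.
  intros [W [Hsteps HW]]; exists (CPar W Z).
  split; [apply csteps_par_l, Hsteps | apply CC_par, HW].
Qed.

Lemma csteps_upto_nu a X Y : csteps_upto X Y -> csteps_upto (CNu a X) (CNu a Y).
Proof.
  intros [W [Hsteps HW]]; exists (CNu a W).
  split; [apply csteps_nu, Hsteps | apply CC_nu, HW].
Qed.

Lemma simulate_spawn a E M Vs b :
  ~ In b (afn_conf (AActor a (aplug E (ASpawn M)) Vs)) ->
  csteps_upto (trans_conf (AActor a (aplug E (ASpawn M)) Vs))
    (trans_conf (ANu b (APar (AActor a (aplug E (ARet (AName b))) Vs) (AActor b M [])))).
Proof.
  intros Hb.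
  assert (Hb' : ~ In b (cfn_conf (trans_conf (AActor a (aplug E (ASpawn M)) Vs))))
    by (intros H; apply Hb, cfn_trans_conf, H).
  simpl in Hb' |- *; unfold trans_comp in *; rewrite !tr_aplug in *; simpl in *.
  rewrite in_app_iff in Hb'.
  eexists; split.
  - apply csteps_par_r, (csteps_spawn_encoding _ _ b); tauto.
  - rewrite trans_comp_spawn.
    eapply CC_trans; [apply CC_extr; simpl; tauto | apply CC_nu].
    eapply CC_trans; [apply ccong_par_r, CC_sym, CC_assoc |].
    eapply CC_trans; [apply CC_assoc | apply ccong_par_r, CC_comm].
Qed.

Lemma simulate_send a E V b Vs M Ws :
  csteps_upto
    (trans_conf (APar (AActor a (aplug E (ASend V (AName b))) Vs) (AActor b M Ws)))
    (trans_conf (APar (AActor a (aplug E (ARet AUnit)) Vs) (AActor b M (Ws ++ [V])))).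
Proof.
  simpl; unfold trans_comp; rewrite !tr_aplug, map_app; simpl.
  eapply csteps_upto_ccong; [apply ccong_par_shuffle | | apply CC_sym, ccong_par_shuffle].
  apply csteps_upto_of_csteps, rt_step, CS_par, CS_give.
Qed.

Lemma simulate_send_self a E V Vs :
  csteps_upto (trans_conf (AActor a (aplug E (ASend V (AName a))) Vs))
    (trans_conf (AActor a (aplug E (ARet AUnit)) (Vs ++ [V]))).
Proof.
  simpl; unfold trans_comp; rewrite !tr_aplug, map_app; simpl.
  eapply csteps_upto_ccong; [apply CC_comm | | apply CC_comm].
  apply csteps_upto_of_csteps, rt_step, CS_give.
Qed.

Lemma simulate_self a E Vs :
  csteps_upto (trans_conf (AActor a (aplug E ASelf) Vs))
    (trans_conf (AActor a (aplug E (ARet (AName a))) Vs)).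
Proof.
  simpl; unfold trans_comp; rewrite !tr_aplug.
  apply csteps_upto_of_csteps, rt_refl.
Qed.

Lemma simulate_receive a E W Vs :
  csteps_upto (trans_conf (AActor a (aplug E AReceive) (W :: Vs)))
    (trans_conf (AActor a (aplug E (ARet W)) Vs)).
Proof.
  simpl; unfold trans_comp; rewrite !tr_aplug; simpl.
  eapply csteps_upto_ccong; [apply CC_comm | | apply CC_comm].
  apply csteps_upto_of_csteps, rt_step, CS_take.
Qed.

Lemma simulate_term a M1 M2 Vs :
  astep_t M1 M2 ->
  csteps_upto (trans_conf (AActor a M1 Vs)) (trans_conf (AActor a M2 Vs)).
Proof.
  intros H; apply csteps_upto_of_csteps, csteps_par_r, csteps_thread.
  apply trans_comp_step_t, H.
Qed.

Theorem theorem21 :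
  forall (Gv : list aty) (Gn : nctx) (D : list (name * aty)) (C1 C2 : aconf),
    aty_conf Gv Gn D C1 ->
    astep C1 C2 ->
    exists Dc : cconf, csteps (trans_conf C1) Dc /\ ccong Dc (trans_conf C2).
Proof.
  intros Gv Gn D C1 C2 _ Hstep.
  change (csteps_upto (trans_conf C1) (trans_conf C2)).
  induction Hstep as [a E M Vs b Hb | a E V b Vs M Ws | a E V Vs | a E Vs | a E W Vs
                     | a M1 M2 Vs Ht | C C' D' _ IH | b C C' _ IH | C C' D' D'' HC _ IH HD].
  - apply simulate_spawn, Hb.
  - apply simulate_send.
  - apply simulate_send_self.
  - apply simulate_self.
  - apply simulate_receive.
  - apply simulate_term, Ht.
  - apply csteps_upto_par, IH.
  - apply csteps_upto_nu, IH.
  - eapply csteps_upto_ccong;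
      [apply trans_conf_ccong, HC | exact IH | apply trans_conf_ccong, HD].
Qed.
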